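(* Let $d\ge3$ and $n=d+1$. The maximum size of a family $\mathcal{A}\subset2^{[n]}$ with $\mathrm{VC}(\mathcal{A}\cap\mathcal{A})\le d$ and $\mathrm{VC}(\mathcal{A}\cup\mathcal{A})\le d$ is $2^n-2$.
   Context: $[n]=\{1,\dots,n\}$. $\mathrm{VC}(\mathcal{F})$ is the largest cardinality of a $Y\subset[n]$ with $\{S\cap Y:S\in\mathcal{F}\}=2^Y$. $\mathcal{A}\cap\mathcal{A}=\{S\cap T:S,T\in\mathcal{A}\}$ and $\mathcal{A}\cup\mathcal{A}=\{S\cup T:S,T\in\mathcal{A}\}$. *)

From mathcomp Require Import all_boot.
Set Implicit Arguments. Unset Strict Implicit. Unset Printing Implicit Defensive.

Definition shatters (n : nat) (F : {set {set 'I_n}}) (Y : {set 'I_n}) : bool :=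
  [set S :&: Y | S in F] == powerset Y.

Definition VC (n : nat) (F : {set {set 'I_n}}) : nat :=
  \max_(Y : {set 'I_n} | shatters F Y) #|Y|.

Definition fam_cap (n : nat) (A : {set {set 'I_n}}) : {set {set 'I_n}} :=
  [set S :&: T | S in A, T in A].
Definition fam_cup (n : nat) (A : {set {set 'I_n}}) : {set {set 'I_n}} :=
  [set S :|: T | S in A, T in A].

From mathcomp Require Import all_boot zify.

(* Since only [n] itself has cardinality [n], VC F <= n - 1 just says that F is
   not the whole power set. Any family A with this property for both A ∩ A and
   A ∪ A misses some X from A ∩ A ⊇ A and some Y from A ∪ A ⊇ A. If X = Y and A
   contained every other set, then X, having two elements or two non-elements
   once n >= 3, would be the union of two of its proper subsets or the
   intersection of two of its proper supersets. So A misses two sets. The family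
   of all sets but ∅ and [n] attains 2^n - 2, since [n] ∉ A ∩ A and ∅ ∉ A ∪ A. *)

Lemma set1I_set1 (T : finType) (i j : T) : i != j -> [set i] :&: [set j] = set0.
Proof. by move=> ij; apply/eqP; rewrite setI_eq0 disjoints1 inE. Qed.

Section Families.

Variable n : nat.
Implicit Types (F A : {set {set 'I_n}}) (X Y Z : {set 'I_n}).

Lemma shatters_setT F : shatters F setT = (F == setT).
Proof.
by rewrite /shatters powersetT (eq_imset _ (@setIT _)) imset_id.
Qed.

Lemma subset_fam_cap A : A \subset fam_cap A.
Proof. by apply/subsetP => S SA; apply/imset2P; exists S S; rewrite ?setIid. Qed.

Lemma subset_fam_cup A : A \subset fam_cup A.
Proof. by apply/subsetP => S SA; apply/imset2P; exists S S; rewrite ?setUid. Qed.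

Lemma fam_cap_neqT A : setT \notin A -> fam_cap A != setT.
Proof.
move=> TnA; apply/eqP => capT; have /imset2P [S T SA _ STT] : setT \in fam_cap A.
  by rewrite capT inE.
have : setT \subset S by rewrite STT subsetIl.
by rewrite subTset => /eqP ST; rewrite -ST SA in TnA.
Qed.

Lemma fam_cup_neqT A : set0 \notin A -> fam_cup A != setT.
Proof.
move=> nA0; apply/eqP => cupT; have /imset2P [S T SA _ /esym/eqP] : set0 \in fam_cup A.
  by rewrite cupT inE.
by rewrite setU_eq0 => /andP [/eqP S0 _]; rewrite -S0 SA in nA0.
Qed.

Lemma card_setT_sets : #|[set: {set 'I_n}]| = 2 ^ n.
Proof. by rewrite -powersetT card_powerset cardsT card_ord. Qed.

Lemma card_setC2_sets {X Z} : X != Z -> #|~: [set X; Z]| = 2 ^ n - 2.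
Proof.
by move=> XZ; rewrite cardsCs setCK cards2 XZ -cardsT card_setT_sets.
Qed.

Lemma card_le_two_missing A X Z :
  X != Z -> X \notin A -> Z \notin A -> #|A| <= 2 ^ n - 2.
Proof.
move=> XZ XA ZA; rewrite -(card_setC2_sets XZ); apply: subset_leq_card.
apply/subsetP => S SA; rewrite !inE negb_or.
by apply/andP; split; [apply: contraNneq XA => <- | apply: contraNneq ZA => <-].
Qed.

Lemma setU1I_setU1 X {i j} : i != j -> (i |: X) :&: (j |: X) = X.
Proof. by move=> ij; rewrite -setUIl set1I_set1 ?set0U. Qed.

Lemma setD1U_setD1 X {a b} : a != b -> (X :\ a) :|: (X :\ b) = X.
Proof. by move=> ab; rewrite -setDIr set1I_set1 ?setD0. Qed.

Lemma mem_fam_cap_or_cup {A X} : 2 < n ->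
  ~: [set X] \subset A -> (X \in fam_cap A) || (X \in fam_cup A).
Proof.
move=> n_gt2 /subsetP AnX; have [two_out | out_le1] := ltnP 1 #|~: X|.
  case/card_gt1P: two_out => i [j [iX jX ij]]; rewrite !inE in iX jX.
  rewrite -(setU1I_setU1 X ij) imset2_f // AnX // !inE.
    by apply: contraNneq iX => <-; rewrite setU11.
  by apply: contraNneq jX => <-; rewrite setU11.
have /card_gt1P [a [b [aX bX ab]]] : 1 < #|X|.
  by have := cardsC X; rewrite card_ord; lia.
rewrite -(setD1U_setD1 X ab) orbC imset2_f // AnX // !inE.
  by apply: contraTneq aX => <-; rewrite setD11.
by apply: contraTneq bX => <-; rewrite setD11.
Qed.

Lemma card_le_fam_cap_cup_neqT A : 2 < n ->
  fam_cap A != setT -> fam_cup A != setT -> #|A| <= 2 ^ n - 2.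
Proof.
move=> n_gt2; rewrite -!properT => /properP [_ [X _ XnC]] /properP [_ [Y _ YnU]].
have XnA : X \notin A := contra (subsetP (subset_fam_cap A) X) XnC.
have YnA : Y \notin A := contra (subsetP (subset_fam_cup A) Y) YnU.
have [eqXY | neqXY] := eqVneq X Y; last exact: card_le_two_missing neqXY XnA YnA.
have [AnX | /subsetPn [Z]] := boolP (~: [set X] \subset A).
  by move: (mem_fam_cap_or_cup n_gt2 AnX); rewrite (negbTE XnC) eqXY (negbTE YnU).
by rewrite !inE => ZX ZnA; apply: card_le_two_missing ZX ZnA XnA.
Qed.

End Families.

Lemma VC_leq d (F : {set {set 'I_d.+1}}) : (VC F <= d) = (F != setT).
Proof.
apply/bigmax_leqP/idP => [leFd | FnT Y shY].
  apply/eqP => FT; have := leFd setT; rewrite shatters_setT FT eqxx.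
  by rewrite cardsT card_ord ltnn => /(_ isT).
suff : #|Y| < #|[set: 'I_d.+1]| by rewrite cardsT card_ord.
apply: proper_card; rewrite properT.
by apply: contraNneq FnT => YT; rewrite -shatters_setT -YT.
Qed.

Lemma set0_neq_setT d : set0 != [set: 'I_d.+1].
Proof. by apply/eqP => /setP /(_ ord0); rewrite !inE. Qed.

Theorem mainTheorem10 (d : nat) (hd : 3 <= d) :
  let n := d.+1 in
  (exists A : {set {set 'I_n}},
      [/\ VC (fam_cap A) <= d, VC (fam_cup A) <= d & #|A| = 2 ^ n - 2]) /\
  (forall A : {set {set 'I_n}},
      VC (fam_cap A) <= d -> VC (fam_cup A) <= d -> #|A| <= 2 ^ n - 2).
Proof.
move=> n; split => [|A]; last first.
  by rewrite !VC_leq; apply: card_le_fam_cap_cup_neqT; apply: leqW.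
exists (~: [set set0; setT]); rewrite !VC_leq (card_setC2_sets _ (set0_neq_setT d)).
by split=> //; [apply: fam_cap_neqT | apply: fam_cup_neqT]; rewrite !inE eqxx ?orbT.
Qed.
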